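(* Let $U=(\mathbb{R}^2\setminus\{0\})\times\mathbb{R}^{0|1}$ with even coordinates $(p,q)$ and odd coordinate $\tau$. Let $F$ be a superfunction on $U$ of pure parity that is homogeneous of degree $2$, i.e. $\mathcal{E}(F)=2F$. Then for all superfunctions $G,H$ on $U$ of pure parity, $$ \{F,\{G,H\}_{\rm gPb}\} =(-1)^{\sigma(F)}\,\{\{F,G\},H\}_{\rm gPb}+(-1)^{\sigma(F)(\sigma(G)+1)}\,\{G,\{F,H\}\}_{\rm gPb}. $$ In other words, the ghost Poisson bracket is invariant under the action of the conformal Lie superalgebra $\mathcal{K}(1)$ (the space of degree-$2$ homogeneous superfunctions with the Poisson bracket).
   Context: Superfunctions on $U$ are expressions $F=F_0(p,q)+\tau F_1(p,q)$ with $F_0,F_1$ smooth complex-valued functions on $\mathbb{R}^2\setminus\{0\}$, $\tau^2=0$, $\tau$ commuting with $p,q$. Parity: $\sigma(F_0)=0$, $\sigma(\tau F_1)=1$. Partial derivatives $\partial/\partial p,\partial/\partial q$ act coefficientwise, and $\partial(F_0+\tau F_1)/\partial\tau=F_1$. The Euler field is $\mathcal{E}=p\,\partial_p+q\,\partial_q+\tau\,\partial_\tau$. The Poisson bracket is $$\{F,G\}=\frac{\partial F}{\partial p}\frac{\partial G}{\partial q}-\frac{\partial F}{\partial q}\frac{\partial G}{\partial p}+\frac{\partial F}{\partial \tau}\frac{\partial G}{\partial \tau},$$ and the ghost Poisson bracket is the odd operation $$\{F,G\}_{\rm gPb}=\frac{\partial F}{\partial \tau}\,\mathcal{E}(G)-(-1)^{\sigma(F)}\,\mathcal{E}(F)\,\frac{\partial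 G}{\partial \tau}+\tau\left(\frac{\partial F}{\partial p}\frac{\partial G}{\partial q}-\frac{\partial F}{\partial q}\frac{\partial G}{\partial p}\right).$$ *)

From Stdlib Require Import Reals List.
From Coquelicot Require Import Coquelicot.
Set Implicit Arguments.
Open Scope R_scope.

Definition Dp (f : R -> R -> C) : R -> R -> C :=
  fun p q => (Derive (fun t => fst (f t q)) p, Derive (fun t => snd (f t q)) p).
Definition Dq (f : R -> R -> C) : R -> R -> C :=
  fun p q => (Derive (fun t => fst (f p t)) q, Derive (fun t => snd (f p t)) q).

Fixpoint iterD (l : list bool) (f : R -> R -> C) : R -> R -> C :=
  match l with
  | nil => f
  | b :: l' => (if b then Dp else Dq) (iterD l' f)
  end.

Definition inU (p q : R) : Prop := (p, q) <> (0, 0).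

Definition smoothU (f : R -> R -> C) : Prop :=
  forall (l : list bool) (p q : R), inU p q ->
    continuous (fun z : R * R => iterD l f (fst z) (snd z)) (p, q) /\
    ex_derive (fun t => fst (iterD l f t q)) p /\
    ex_derive (fun t => snd (iterD l f t q)) p /\
    ex_derive (fun t => fst (iterD l f p t)) q /\
    ex_derive (fun t => snd (iterD l f p t)) q.

(* superfunction F0 + tau F1 *)
Record superfun := SF { sf0 : R -> R -> C ; sf1 : R -> R -> C }.

Definition sf_smooth (F : superfun) : Prop := smoothU (sf0 F) /\ smoothU (sf1 F).

(* pure parity s (false = even: F = F0, true = odd: F = tau F1), on U *)
Definition has_parity (F : superfun) (s : bool) : Prop :=
  forall p q, inU p q -> (if s then sf0 F p q = 0%C else sf1 F p q = 0%C).

Definition eqU (F G : superfun) : Prop :=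
  forall p q, inU p q -> sf0 F p q = sf0 G p q /\ sf1 F p q = sf1 G p q.

(* algebra operations; tau^2 = 0, tau commutes with p, q *)
Definition sf_add (F G : superfun) : superfun :=
  SF (fun p q => (sf0 F p q + sf0 G p q)%C) (fun p q => (sf1 F p q + sf1 G p q)%C).
Definition sf_sub (F G : superfun) : superfun :=
  SF (fun p q => (sf0 F p q - sf0 G p q)%C) (fun p q => (sf1 F p q - sf1 G p q)%C).
Definition sf_scal (c : C) (F : superfun) : superfun :=
  SF (fun p q => (c * sf0 F p q)%C) (fun p q => (c * sf1 F p q)%C).
Definition sf_mul (F G : superfun) : superfun :=
  SF (fun p q => (sf0 F p q * sf0 G p q)%C)
     (fun p q => (sf0 F p q * sf1 G p q + sf1 F p q * sf0 G p q)%C).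
Definition sf_tau (F : superfun) : superfun :=
  SF (fun _ _ => 0%C) (fun p q => sf0 F p q).

Definition sf_Dp (F : superfun) : superfun := SF (Dp (sf0 F)) (Dp (sf1 F)).
Definition sf_Dq (F : superfun) : superfun := SF (Dq (sf0 F)) (Dq (sf1 F)).
Definition sf_Dtau (F : superfun) : superfun := SF (sf1 F) (fun _ _ => 0%C).

Definition sf_p : superfun := SF (fun p _ => RtoC p) (fun _ _ => 0%C).
Definition sf_q : superfun := SF (fun _ q => RtoC q) (fun _ _ => 0%C).

Definition euler (F : superfun) : superfun :=
  sf_add (sf_add (sf_mul sf_p (sf_Dp F)) (sf_mul sf_q (sf_Dq F)))
         (sf_tau (sf_Dtau F)).

Definition sgn (s : bool) : C := if s then (-1)%C else 1%C.

Definition pb (F G : superfun) : superfun :=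
  sf_add (sf_sub (sf_mul (sf_Dp F) (sf_Dq G)) (sf_mul (sf_Dq F) (sf_Dp G)))
         (sf_mul (sf_Dtau F) (sf_Dtau G)).

(* ghost Poisson bracket; sF is the parity sigma(F) of the first argument *)
Definition gpb (sF : bool) (F G : superfun) : superfun :=
  sf_add (sf_sub (sf_mul (sf_Dtau F) (euler G))
                 (sf_scal (sgn sF) (sf_mul (euler F) (sf_Dtau G))))
         (sf_tau (sf_sub (sf_mul (sf_Dp F) (sf_Dq G)) (sf_mul (sf_Dq F) (sf_Dp G)))).

(* Both sides are built from partial derivatives, so the identity is checked
   pointwise: at a point of U each component of each side is a polynomial in
   the 2-jets of the components of F, G and H, obtained by the Leibniz rule
   (mixed partials agree by Schwarz).  Writing F = f0 + tau f1, the condition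
   E(F) = 2F says that f0 is homogeneous of degree 2 and f1 of degree 1, so
   their first partials are homogeneous of one degree less.  At a point with
   p <> 0 (resp. q <> 0) these Euler relations express the value, the pp- and
   the pq-derivative (resp. the qq- and the pq-derivative) of f0 and f1 through
   the other jet coordinates; after this substitution, and after discarding the
   components that vanish by the parity assumptions, every case is an identity
   of rational functions. *)

From Stdlib Require Import Reals List Lra.
From Coquelicot Require Import Coquelicot.
Open Scope R_scope.

Lemma Ceq_of_sub_eq (x y a b : C) : a = b -> (x - y = a - b)%C -> x = y.
Proof.
  intros Eab Exy; rewrite Eab in Exy.
  replace x with (y + (x - y))%C by ring; rewrite Exy; ring.
Qed.

Lemma RtoC_neq_0 x : x <> 0 -> RtoC x <> 0%C.
Proof. intros Hx [= E]; contradiction. Qed.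

Definition is_Cderive (g : R -> C) (x : R) (a : C) : Prop :=
  is_derive (fun t => fst (g t)) x (fst a) /\ is_derive (fun t => snd (g t)) x (snd a).

Lemma is_derive_Rmult (u v : R -> R) x du dv :
  is_derive u x du -> is_derive v x dv ->
  is_derive (fun t => u t * v t) x (du * v x + u x * dv).
Proof. intros Hu Hv. exact (is_derive_mult u v x du dv Hu Hv Rmult_comm). Qed.

Lemma is_Cderive_const (c : C) x : is_Cderive (fun _ => c) x 0%C.
Proof. split; exact (is_derive_const _ x). Qed.

Lemma is_Cderive_RtoC x : is_Cderive RtoC x 1%C.
Proof. split; [exact (is_derive_id x) | exact (is_derive_const 0 x)]. Qed.

Lemma is_Cderive_plus g h x a b :
  is_Cderive g x a -> is_Cderive h x b -> is_Cderive (fun t => (g t + h t)%C) x (a + b)%C.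
Proof. intros [? ?] [? ?]; split; now apply (is_derive_plus (V := R_NormedModule)). Qed.

Lemma is_Cderive_opp g x a : is_Cderive g x a -> is_Cderive (fun t => (- g t)%C) x (- a)%C.
Proof. intros [? ?]; split; now apply (is_derive_opp (V := R_NormedModule)). Qed.

Lemma is_Cderive_mult g h x a b :
  is_Cderive g x a -> is_Cderive h x b ->
  is_Cderive (fun t => (g t * h t)%C) x (a * h x + g x * b)%C.
Proof.
  intros [Hg1 Hg2] [Hh1 Hh2]; split; cbn.
  - replace (fst a * fst (h x) - snd a * snd (h x) + (fst (g x) * fst b - snd (g x) * snd b))
      with ((fst a * fst (h x) + fst (g x) * fst b) - (snd a * snd (h x) + snd (g x) * snd b))
      by ring.
    apply (is_derive_minus (V := R_NormedModule)); now apply is_derive_Rmult.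
  - replace (fst a * snd (h x) + snd a * fst (h x) + (fst (g x) * snd b + snd (g x) * fst b))
      with ((fst a * snd (h x) + fst (g x) * snd b) + (snd a * fst (h x) + snd (g x) * fst b))
      by ring.
    apply (is_derive_plus (V := R_NormedModule)); now apply is_derive_Rmult.
Qed.

Definition pderiv (b : bool) : (R -> R -> C) -> R -> R -> C := if b then Dp else Dq.

Definition is_pderiv (b : bool) (f : R -> R -> C) (p q : R) (a : C) : Prop :=
  if b then is_Cderive (fun t => f t q) p a else is_Cderive (fun t => f p t) q a.

Lemma pderiv_unique b f p q a : is_pderiv b f p q a -> pderiv b f p q = a.
Proof.
  destruct a; destruct b; intros [H1 H2]; unfold pderiv, Dp, Dq;
    f_equal; now apply is_derive_unique.
Qed.

Lemma is_pderiv_const b (c : C) p q : is_pderiv b (fun _ _ => c) p q 0%C.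
Proof. destruct b; apply is_Cderive_const. Qed.

Lemma is_pderiv_coord_p b p q : is_pderiv b (fun x _ => RtoC x) p q (if b then 1 else 0)%C.
Proof. destruct b; [apply is_Cderive_RtoC | apply is_Cderive_const]. Qed.

Lemma is_pderiv_coord_q b p q : is_pderiv b (fun _ y => RtoC y) p q (if b then 0 else 1)%C.
Proof. destruct b; [apply is_Cderive_const | apply is_Cderive_RtoC]. Qed.

Lemma is_pderiv_plus b f g p q a c :
  is_pderiv b f p q a -> is_pderiv b g p q c ->
  is_pderiv b (fun x y => (f x y + g x y)%C) p q (a + c)%C.
Proof. destruct b; apply is_Cderive_plus. Qed.

Lemma is_pderiv_minus b f g p q a c :
  is_pderiv b f p q a -> is_pderiv b g p q c ->
  is_pderiv b (fun x y => (f x y - g x y)%C) p q (a - c)%C.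
Proof. destruct b; intros Hf Hg; apply is_Cderive_plus; auto; now apply is_Cderive_opp. Qed.

Lemma is_pderiv_mult b f g p q a c :
  is_pderiv b f p q a -> is_pderiv b g p q c ->
  is_pderiv b (fun x y => (f x y * g x y)%C) p q (a * g p q + f p q * c)%C.
Proof. destruct b; apply is_Cderive_mult. Qed.

Lemma smoothU_pderiv b f : smoothU f -> smoothU (pderiv b f).
Proof.
  intros Hf l p q Hpq.
  replace (iterD l (pderiv b f)) with (iterD (l ++ b :: nil) f); [now apply Hf|].
  induction l as [|b' l IH]; cbn; [reflexivity | congruence].
Qed.

Lemma is_pderiv_smooth b f p q : smoothU f -> inU p q -> is_pderiv b f p q (pderiv b f p q).
Proof.
  intros Hf Hpq; destruct (Hf nil p q Hpq) as (_ & Hp1 & Hp2 & Hq1 & Hq2).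
  destruct b; split; now apply Derive_correct.
Qed.

Lemma inU_coord_neq_0 p q : inU p q -> p <> 0 \/ q <> 0.
Proof.
  intros Hpq; destruct (Req_dec p 0) as [-> | Hp]; [right | now left].
  intros ->; now apply Hpq.
Qed.

Lemma inU_locally_2d p q : inU p q -> locally_2d inU p q.
Proof.
  intros Hpq; destruct (inU_coord_neq_0 p q Hpq) as [Hp | Hq].
  - assert (Hp' : 0 < Rabs p) by now apply Rabs_pos_lt.
    exists (mkposreal _ Hp'); intros u v Hu _ [= -> _].
    cbn in Hu; rewrite Rminus_0_l, Rabs_Ropp in Hu; lra.
  - assert (Hq' : 0 < Rabs q) by now apply Rabs_pos_lt.
    exists (mkposreal _ Hq'); intros u v _ Hv [= _ ->].
    cbn in Hv; rewrite Rminus_0_l, Rabs_Ropp in Hv; lra.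
Qed.

Lemma pderiv_ext_U b f g p q :
  (forall u v, inU u v -> f u v = g u v) -> inU p q -> pderiv b f p q = pderiv b g p q.
Proof.
  intros Efg Hpq; pose proof (inU_locally_2d p q Hpq) as Hloc.
  destruct b; unfold pderiv, Dp, Dq; f_equal; apply Derive_ext_loc;
    [ generalize (locally_2d_1d_const_y _ _ _ Hloc)
    | generalize (locally_2d_1d_const_y _ _ _ Hloc)
    | generalize (locally_2d_1d_const_x _ _ _ Hloc)
    | generalize (locally_2d_1d_const_x _ _ _ Hloc) ];
    apply filter_imp; intros t Ht; now rewrite Efg.
Qed.

Definition vanishes_on_U (f : R -> R -> C) : Prop := forall p q, inU p q -> f p q = 0%C.

Lemma vanishes_on_U_pderiv b f : vanishes_on_U f -> vanishes_on_U (pderiv b f).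
Proof.
  intros Hf p q Hpq; rewrite (pderiv_ext_U b f (fun _ _ => 0%C) p q Hf Hpq).
  apply pderiv_unique, is_pderiv_const.
Qed.

Lemma smoothU_continuity_2d l f p q (proj : C -> R) :
  (forall z, continuous proj z) -> smoothU f -> inU p q ->
  continuity_2d_pt (fun u v => proj (iterD l f u v)) p q.
Proof.
  intros Hproj Hf Hpq; apply continuity_2d_pt_filterlim.
  destruct (Hf l p q Hpq) as [Hcont _].
  exact (filterlim_comp _ _ _ _ proj _ _ _ Hcont (Hproj _)).
Qed.

Lemma Dp_Dq_comm f p q : smoothU f -> inU p q -> Dp (Dq f) p q = Dq (Dp f) p q.
Proof.
  intros Hf Hpq.
  assert (Hproj_fst : forall z : C, continuous fst z) by (intros []; apply continuous_fst).
  assert (Hproj_snd : forall z : C, continuous snd z) by (intros []; apply continuous_snd).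
  assert (Hex : forall proj : C -> R, proj = fst \/ proj = snd ->
    locally_2d (fun u v =>
      ex_derive (fun z => proj (f z v)) u /\ ex_derive (fun z => proj (f u z)) v /\
      ex_derive (fun z => Derive (fun t => proj (f z t)) v) u /\
      ex_derive (fun z => Derive (fun t => proj (f t z)) u) v) p q).
  { intros proj Hproj; generalize (inU_locally_2d p q Hpq); apply locally_2d_impl.
    apply locally_2d_forall; intros u v Huv.
    destruct (Hf nil u v Huv) as (_ & Hp1 & Hp2 & Hq1 & Hq2).
    destruct (Hf (false :: nil) u v Huv) as (_ & Hqp1 & Hqp2 & _).
    destruct (Hf (true :: nil) u v Huv) as (_ & _ & _ & Hpq1 & Hpq2).
    destruct Hproj as [-> | ->]; cbn in *; unfold Dp, Dq in *; tauto. }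
  unfold Dp, Dq; cbn; f_equal; apply Schwarz;
    solve [ apply Hex; auto
          | exact (smoothU_continuity_2d (true :: false :: nil) f p q _ Hproj_fst Hf Hpq)
          | exact (smoothU_continuity_2d (true :: false :: nil) f p q _ Hproj_snd Hf Hpq)
          | exact (smoothU_continuity_2d (false :: true :: nil) f p q _ Hproj_fst Hf Hpq)
          | exact (smoothU_continuity_2d (false :: true :: nil) f p q _ Hproj_snd Hf Hpq) ].
Qed.

Lemma Dp_unique f p q a : is_pderiv true f p q a -> Dp f p q = a.
Proof. exact (pderiv_unique true f p q a). Qed.

Lemma Dq_unique f p q a : is_pderiv false f p q a -> Dq f p q = a.
Proof. exact (pderiv_unique false f p q a). Qed.

Ltac solve_smoothU :=
  lazymatch goal with
  | |- smoothU (Dp _) => apply (smoothU_pderiv true); solve_smoothU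
  | |- smoothU (Dq _) => apply (smoothU_pderiv false); solve_smoothU
  | |- smoothU _ => assumption
  end.

Ltac solve_is_pderiv :=
  lazymatch goal with
  | |- is_pderiv _ (fun _ _ => ?c) _ _ _ => apply is_pderiv_const
  | |- is_pderiv _ (fun x _ => RtoC x) _ _ _ => apply is_pderiv_coord_p
  | |- is_pderiv _ (fun _ y => RtoC y) _ _ _ => apply is_pderiv_coord_q
  | |- is_pderiv _ (fun x y => (@?f x y + @?g x y)%C) _ _ _ =>
      apply is_pderiv_plus; solve_is_pderiv
  | |- is_pderiv _ (fun x y => (@?f x y - @?g x y)%C) _ _ _ =>
      apply is_pderiv_minus; solve_is_pderiv
  | |- is_pderiv _ (fun x y => (@?f x y * @?g x y)%C) _ _ _ =>
      apply is_pderiv_mult; solve_is_pderiv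
  | |- is_pderiv _ _ _ _ _ =>
      apply is_pderiv_smooth; [solve_smoothU | assumption]
  end.

(* Replaces every partial derivative of an explicit [fun x y => ...] by its
   value given by the Leibniz rules; after [cbn] of the superfunction
   operations only such terms and jets of the smooth components occur. *)
Ltac eval_pderivs :=
  repeat match goal with
  | |- context [Dp (fun x y => @?e x y) ?p ?q] =>
      let H := fresh in
      eassert (H : is_pderiv true (fun x y => e x y) p q _) by solve_is_pderiv;
      rewrite (Dp_unique _ _ _ _ H); clear H
  | |- context [Dq (fun x y => @?e x y) ?p ?q] =>
      let H := fresh in
      eassert (H : is_pderiv false (fun x y => e x y) p q _) by solve_is_pderiv;
      rewrite (Dq_unique _ _ _ _ H); clear H
  end; cbn [pderiv].

Definition homogeneous (k : C) (f : R -> R -> C) : Prop :=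
  forall p q, inU p q -> (RtoC p * Dp f p q + RtoC q * Dq f p q = k * f p q)%C.

Lemma homogeneous_Dp k f : smoothU f -> homogeneous k f -> homogeneous (k - 1) (Dp f).
Proof.
  intros Hf Hk p q Hpq.
  assert (E := pderiv_ext_U true _ _ p q Hk Hpq); cbn [pderiv] in E; revert E.
  eval_pderivs; rewrite Dp_Dq_comm by assumption.
  intros E; apply (Ceq_of_sub_eq _ _ _ _ E); ring.
Qed.

Lemma homogeneous_Dq k f : smoothU f -> homogeneous k f -> homogeneous (k - 1) (Dq f).
Proof.
  intros Hf Hk p q Hpq.
  assert (E := pderiv_ext_U false _ _ p q Hk Hpq); cbn [pderiv] in E; revert E.
  eval_pderivs; rewrite Dp_Dq_comm by assumption.
  intros E; apply (Ceq_of_sub_eq _ _ _ _ E); ring.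
Qed.

(* The conjuncts are ordered so that rewriting with them from left to right
   eliminates the jet coordinates on their left-hand sides. *)
Lemma homogeneous_jet_p k f p q :
  smoothU f -> homogeneous k f -> inU p q -> k <> 0%C -> p <> 0 ->
  f p q = ((RtoC p * Dp f p q + RtoC q * Dq f p q) / k)%C /\
  Dp (Dp f) p q = (((k - 1) * Dp f p q - RtoC q * Dp (Dq f) p q) / RtoC p)%C /\
  Dp (Dq f) p q = (((k - 1) * Dq f p q - RtoC q * Dq (Dq f) p q) / RtoC p)%C.
Proof.
  intros Hf Hk Hpq Hk0 Hp; pose proof (RtoC_neq_0 p Hp) as Hp'.
  pose proof (homogeneous_Dp k f Hf Hk p q Hpq) as Ep.
  pose proof (homogeneous_Dq k f Hf Hk p q Hpq) as Eq.
  rewrite <- Dp_Dq_comm in Ep by assumption.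
  split; [|split]; [rewrite (Hk p q Hpq) | rewrite <- Ep | rewrite <- Eq]; field; assumption.
Qed.

Lemma homogeneous_jet_q k f p q :
  smoothU f -> homogeneous k f -> inU p q -> k <> 0%C -> q <> 0 ->
  f p q = ((RtoC p * Dp f p q + RtoC q * Dq f p q) / k)%C /\
  Dq (Dq f) p q = (((k - 1) * Dq f p q - RtoC p * Dp (Dq f) p q) / RtoC q)%C /\
  Dp (Dq f) p q = (((k - 1) * Dp f p q - RtoC p * Dp (Dp f) p q) / RtoC q)%C.
Proof.
  intros Hf Hk Hpq Hk0 Hq; pose proof (RtoC_neq_0 q Hq) as Hq'.
  pose proof (homogeneous_Dp k f Hf Hk p q Hpq) as Ep.
  pose proof (homogeneous_Dq k f Hf Hk p q Hpq) as Eq.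
  rewrite <- Dp_Dq_comm in Ep by assumption.
  split; [|split]; [rewrite (Hk p q Hpq) | rewrite <- Eq | rewrite <- Ep]; field; assumption.
Qed.

Lemma homogeneous_of_euler F :
  eqU (euler F) (sf_scal (RtoC 2) F) -> homogeneous (RtoC 2) (sf0 F) /\ homogeneous 1 (sf1 F).
Proof.
  intros HE; split; intros p q Hpq; destruct (HE p q Hpq) as [E0 E1];
    cbn [euler sf0 sf1 sf_add sf_mul sf_scal sf_tau sf_Dtau sf_Dp sf_Dq sf_p sf_q] in E0, E1.
  - apply (Ceq_of_sub_eq _ _ _ _ E0); ring.
  - apply (Ceq_of_sub_eq _ _ _ _ E1); ring.
Qed.

Lemma vanishes_on_U_of_parity F s :
  has_parity F s -> vanishes_on_U (if s then sf0 F else sf1 F).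
Proof. intros HF p q Hpq; specialize (HF p q Hpq); now destruct s. Qed.

Lemma vanishes_on_U_2jet f p q : vanishes_on_U f -> inU p q ->
  f p q = 0%C /\ Dp f p q = 0%C /\ Dq f p q = 0%C /\
  Dp (Dp f) p q = 0%C /\ Dp (Dq f) p q = 0%C /\ Dq (Dq f) p q = 0%C.
Proof.
  intros Hf Hpq.
  pose proof (vanishes_on_U_pderiv true _ Hf) as Hfp.
  pose proof (vanishes_on_U_pderiv false _ Hf) as Hfq.
  repeat split;
    [ apply Hf | apply Hfp | apply Hfq
    | apply (vanishes_on_U_pderiv true _ Hfp)
    | apply (vanishes_on_U_pderiv true _ Hfq)
    | apply (vanishes_on_U_pderiv false _ Hfq) ]; assumption.
Qed.

Ltac rewrite_conj H :=
  lazymatch type of H with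
  | _ /\ _ => let E := fresh in destruct H as [E H]; rewrite ?E; clear E; rewrite_conj H
  | _ => rewrite ?H; clear H
  end.

Theorem theorem1 (F G H : superfun) (sF sG sH : bool) :
  sf_smooth F -> sf_smooth G -> sf_smooth H ->
  has_parity F sF -> has_parity G sG -> has_parity H sH ->
  eqU (euler F) (sf_scal (RtoC 2) F) ->
  eqU (pb F (gpb sG G H))
      (sf_add (sf_scal (sgn sF) (gpb (xorb sF sG) (pb F G) H))
              (sf_scal (sgn (sF && negb sG)) (gpb sG G (pb F H)))).
Proof.
  intros [HF0 HF1] [HG0 HG1] [HH0 HH1] PF PG PH HE p q Hpq.
  destruct (homogeneous_of_euler F HE) as [HkF0 HkF1].
  pose proof (vanishes_on_U_of_parity F sF PF) as ZF.
  pose proof (vanishes_on_U_of_parity G sG PG) as ZG.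
  pose proof (vanishes_on_U_of_parity H sH PH) as ZH.
  cbn [pb gpb euler sf0 sf1 sf_add sf_sub sf_mul sf_scal sf_tau sf_Dtau sf_Dp sf_Dq sf_p sf_q].
  split; eval_pderivs.
  all: rewrite <- ?Dp_Dq_comm by assumption.
  all: assert (H2 : RtoC 2 <> 0%C) by (apply RtoC_neq_0; lra).
  all: destruct (inU_coord_neq_0 p q Hpq) as [Hd | Hd];
    [ pose proof (homogeneous_jet_p _ _ p q HF0 HkF0 Hpq H2 Hd) as J0;
      pose proof (homogeneous_jet_p _ _ p q HF1 HkF1 Hpq C1_nz Hd) as J1
    | pose proof (homogeneous_jet_q _ _ p q HF0 HkF0 Hpq H2 Hd) as J0;
      pose proof (homogeneous_jet_q _ _ p q HF1 HkF1 Hpq C1_nz Hd) as J1 ];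
    rewrite_conj J0; rewrite_conj J1.
  all: destruct sF, sG, sH; cbn [sgn xorb andb negb];
    pose proof (vanishes_on_U_2jet _ p q ZF Hpq) as JF; rewrite_conj JF;
    pose proof (vanishes_on_U_2jet _ p q ZG Hpq) as JG; rewrite_conj JG;
    pose proof (vanishes_on_U_2jet _ p q ZH Hpq) as JH; rewrite_conj JH.
  all: field; now apply RtoC_neq_0.
Qed.
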